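(* Let $C\subset Ob(CC(R,LM))$ be closed under $ft$ and $\le$ a transitive relation on $C$ such that $\Gamma\le\Gamma'$ implies $l(\Gamma)=l(\Gamma')$ and such that for $\Gamma,F\in C$ with $ft(\Gamma)\le F$, $\sigma(\Gamma,F)\in C$ and $\Gamma\le\sigma(\Gamma,F)$. Let $\widetilde C\subset\widetilde{Ob}(CC(R,LM))$ and let $\le'$ be a transitive relation on $\widetilde C$ such that (1) $\mathcal J\le'\mathcal J'$ implies $\partial(\mathcal J)\le\partial(\mathcal J')$, and (2) for $\mathcal J\in\widetilde C$ and $F\in C$ with $\partial(\mathcal J)\le F$, one has $\widetilde\sigma(\mathcal J,F)\in\widetilde C$ and $\mathcal J\le'\widetilde\sigma(\mathcal J,F)$. Then for $\mathcal J\in\widetilde C$ and $F\in C$ with $ft^i(\partial(\mathcal J))\le F$ for some $i\ge0$, one has $\mathcal J\le'\widetilde\sigma(\mathcal J,F)$.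
   Context: $[n]=\{1,\dots,n\}$; $R$ monad on Sets, $LM$ a left $R$-module with values in Sets. $Ob(CC(R,LM))$: sequences $(T_1,\dots,T_n)$, $T_j\in LM([j-1])$; $l$ = length; $ft$ drops last entry. $\widetilde{Ob}(CC(R,LM))$: sequences written $(T_1,\dots,T_{n-1}\vdash t:T_n)$ with $T_j\in LM([j-1])$, $n\ge1$, $t\in R([n-1])$; $\partial(T_1,\dots,T_{n-1}\vdash t:T_n)=(T_1,\dots,T_n)$. $\sigma((T_1,\dots,T_{n+k}),(T'_1,\dots,T'_n))=(T'_1,\dots,T'_n,T_{n+1},\dots,T_{n+k})$ for $k>0$. For $\mathcal J=(T_1,\dots,T_{n+k-1}\vdash t:T_{n+k})$ and $\Gamma'=(T'_1,\dots,T'_n)$ with $n\ge1$, $k\ge0$: $\widetilde\sigma(\mathcal J,\Gamma')=(T'_1,\dots,T'_n,T_{n+1},\dots,T_{n+k-1}\vdash t:T_{n+k})$ if $k>0$, and $=(T'_1,\dots,T'_{n-1}\vdash t:T'_n)$ if $k=0$.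
   Formalization: $\widetilde C$ also satisfies $\partial(\mathcal J)\in C$ for every $\mathcal J\in\widetilde C$, so every element of $\widetilde C$ has its boundary in C. The statement above fails without it. *)

From mathcomp Require Import all_boot.
From Stdlib Require Import PeanoNat.

Set Implicit Arguments.
Unset Strict Implicit.
Unset Printing Implicit Defensive.

Record monad := Monad {
  mT :> Type -> Type;
  mret : forall X : Type, X -> mT X;
  mbind : forall X Y : Type, mT X -> (X -> mT Y) -> mT Y;
  mbind_retl : forall X Y (x : X) (f : X -> mT Y), mbind (mret x) f = f x;
  mbind_retr : forall X (m : mT X), mbind m (@mret X) = m;
  mbind_assoc : forall X Y Z (m : mT X) (f : X -> mT Y) (g : Y -> mT Z),
      mbind (mbind m f) g = mbind m (fun x => mbind (f x) g)
}.

Record lmodule (R : monad) := LModule {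
  lT :> Type -> Type;
  lbind : forall X Y : Type, lT X -> (X -> R Y) -> lT Y;
  lbind_ret : forall X (m : lT X), lbind m (@mret R X) = m;
  lbind_assoc : forall X Y Z (m : lT X) (f : X -> R Y) (g : Y -> R Z),
      lbind (lbind m f) g = lbind m (fun x => mbind (f x) g)
}.

Section CC.
Variables (R : monad) (LM : lmodule R).

(* ctx n = sequences (T_1,...,T_n) with T_j \in LM([j-1]), [j-1] = 'I_(j-1). *)
Fixpoint ctx (n : nat) : Type :=
  match n with
  | 0 => unit
  | S m => (ctx m * LM 'I_m)%type
  end.

Definition Obj : Type := {n : nat & ctx n}.

Definition len (G : Obj) : nat := projT1 G.

(* ft drops the last entry (ft of the empty sequence is itself). *)
Definition ft (G : Obj) : Obj :=
  match G with
  | existT n g =>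
      match n return ctx n -> Obj with
      | 0 => fun g => existT ctx 0 g
      | S m => fun g => existT ctx m g.1
      end g
  end.

(* replace m G' n G: replace the initial segment of length m of G by G'
   (when m <= n); returns G unchanged if m > n. *)
Fixpoint replace (m : nat) (G' : ctx m) (n : nat) : ctx n -> ctx n :=
  match Nat.eq_dec m n with
  | left e => fun _ => eq_rect m ctx G' n e
  | right _ =>
      match n return ctx n -> ctx n with
      | 0 => fun G => G
      | S n' => fun G => (replace G' G.1, G.2)
      end
  end.

(* sigma((T_1..T_{n+k}),(T'_1..T'_n)) = (T'_1..T'_n,T_{n+1},..,T_{n+k}) *)
Definition sigma (G F : Obj) : Obj :=
  existT ctx (projT1 G) (replace (projT2 F) (projT2 G)).

(* ~Ob(CC(R,LM)): (T_1..T_{m} |- t : T_{m+1}) with t \in R([m]). *)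
Definition TObj : Type := {m : nat & (ctx m.+1 * R 'I_m)%type}.

Definition bd (J : TObj) : Obj := existT ctx (projT1 J).+1 (projT2 J).1.

(* ~sigma(J, G'): replace the initial segment of the context of J
   (including the type T_{n+k} when k = 0) by G', keeping the term t. *)
Definition tsigma (J : TObj) (F : Obj) : TObj :=
  existT (fun m => (ctx m.+1 * R 'I_m)%type) (projT1 J)
         (replace (projT2 F) (projT2 J).1, (projT2 J).2).

End CC.

(* For i > 0 put G := ft^(i-1)(bd J); since ft G <= F, the
   object sigma(G, F) lies in C and G <= sigma(G, F), so the induction
   hypothesis gives J <=' tsigma(J, sigma(G, F)). Now sigma(G, F) is F
   followed by the last type of G, which is already the corresponding type
   of J, hence tsigma(J, sigma(G, F)) = tsigma(J, F). *)
From Stdlib Require Import PeanoNat Eqdep_dec Lia.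
From mathcomp Require Import all_boot.

Section Replace.
Variables (R : monad) (LM : lmodule R).

Lemma replace_id n (G' G : ctx LM n) : replace G' G = G'.
Proof.
case: n G' G => [|n] G' G; cbn -[Nat.eq_dec];
  case: (Nat.eq_dec _ _) => [e|//]; by rewrite (UIP_refl_nat _ e).
Qed.

Lemma replace_snoc m n (G' : ctx LM m) (G : ctx LM n.+1) :
  m <> n.+1 -> replace G' G = (replace G' G.1, G.2).
Proof. by move=> ne; cbn -[Nat.eq_dec]; case: (Nat.eq_dec m n.+1). Qed.

Lemma len_iter_ft j (G : Obj LM) : len (iter j (@ft R LM) G) <= len G.
Proof.
elim: j => [|j IH] //=; move: IH; case: (iter j _ G) => [[|k] h] //= Hk.
exact: leq_trans (leq_pred _) Hk.
Qed.

Lemma replace_prefix_snoc {n} (g : ctx LM n) {j k} (F : ctx LM k) {y x} :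
  iter j (@ft R LM) (existT _ n g) = existT _ k.+1 (y, x) ->
  replace ((F, x) : ctx LM k.+1) g = replace F g.
Proof.
elim: n g j => [|n IH] g j.
  by move=> E; have := len_iter_ft j (existT _ 0 g); rewrite E.
case: j => [|j].
  move=> E; have enk : n = k by case: E.
  subst n; move/(inj_pair2_eq_dec _ Nat.eq_dec _ _ _ _): E => ->.
  by rewrite replace_id replace_snoc ?replace_id //; lia.
rewrite iterSr => E; rewrite /= in E.
have lt_kn : k < n by have := len_iter_ft j (existT _ n g.1); rewrite E.
rewrite replace_snoc; last by case=> ekn; rewrite ekn ltnn in lt_kn.
rewrite [RHS]replace_snoc; last by move=> ekn; move/leP: lt_kn; lia.
by rewrite (IH g.1 j).
Qed.

Lemma sigma_len_eq (G F : Obj LM) : len G = len F -> sigma G F = F.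
Proof.
case: G F => [n g] [m f] /= enm; subst m.
by rewrite /sigma /= replace_id.
Qed.

Lemma tsigma_sigma_iter_ft (J : TObj LM) (F : Obj LM) i :
  len F = len (ft (iter i (@ft R LM) (bd J))) ->
  tsigma J (sigma (iter i (@ft R LM) (bd J)) F) = tsigma J F.
Proof.
case EG: (iter i _ _) => [[|k] G] lenF.
  by rewrite sigma_len_eq // lenF.
case: F lenF => m f emk; cbn in emk; subst m.
case: G EG => y x EG.
rewrite /sigma; cbn [projT1 projT2].
rewrite replace_snoc ?replace_id; last by lia.
case: J EG => m [g t] EG.
by rewrite /tsigma; cbn [projT1 projT2 fst snd]; rewrite (replace_prefix_snoc _ f EG).
Qed.

End Replace.

Theorem lemma6p9 (R : monad) (LM : lmodule R)
  (C : Obj LM -> Prop) (le : Obj LM -> Obj LM -> Prop)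
  (Ct : TObj LM -> Prop) (le' : TObj LM -> TObj LM -> Prop) :
  (* C is closed under ft *)
  (forall G, C G -> C (ft G)) ->
  (* le is a transitive relation on C *)
  (forall G G', le G G' -> C G /\ C G') ->
  (forall a b c, le a b -> le b c -> le a c) ->
  (forall G G', le G G' -> len G = len G') ->
  (forall G F, C G -> C F -> le (ft G) F -> C (sigma G F) /\ le G (sigma G F)) ->
  (* ~C lies over C *)
  (forall J, Ct J -> C (bd J)) ->
  (* le' is a transitive relation on ~C *)
  (forall J J', le' J J' -> Ct J /\ Ct J') ->
  (forall a b c, le' a b -> le' b c -> le' a c) ->
  (forall J J', le' J J' -> le (bd J) (bd J')) ->
  (forall J F, Ct J -> C F -> le (bd J) F ->
     Ct (tsigma J F) /\ le' J (tsigma J F)) ->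
  forall (J : TObj LM) (F : Obj LM) (i : nat),
    Ct J -> C F -> le (iter i (@ft R LM) (bd J)) F -> le' J (tsigma J F).
Proof.
move=> C_ft _ _ le_len le_sigma C_bd _ _ _ le'_tsigma J F i CtJ.
elim: i F => [|i IH] F CF le_G_F; first by case: (le'_tsigma J F CtJ CF le_G_F).
set G := iter i _ (bd J) in IH.
have CG : C G by rewrite /G; elim: (i) => [|j]; [exact: C_bd | exact: C_ft].
have le_ftG_F : le (ft G) F by [].
have [C_sigma le_G_sigma] := le_sigma _ _ CG CF le_ftG_F.
rewrite -(@tsigma_sigma_iter_ft _ _ J F i); last by rewrite (le_len _ _ le_ftG_F).
exact: IH _ C_sigma le_G_sigma.
Qed.
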